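(* The class of triangle-free graphs is the union of the class of complete bipartite graphs and the class of complements of all graphs $G$ such that $G$ is a connected (claw, bull)-free graph which is neither an expansion of a path of length at least $4$ nor an expansion of a cycle of length at least $6$.
   Context: A claw is a graph isomorphic to $K_{1,3}$. A bull is the graph obtained from a triangle by adding two pendant edges at two different vertices. A graph is (claw, bull)-free if it has no induced subgraph isomorphic to a claw or to a bull. An expansion of a graph $F$ with vertex set $\{v_1,\dots,v_n\}$ is any graph obtained from $F$ by replacing each vertex $v_i$ by a nonempty clique $K^{[i]}$, the cliques being pairwise vertex-disjoint, and adding all edges between $V(K^{[i]})$ and $V(K^{[j]})$ whenever $v_iv_j\in E(F)$ (and no other edges between different cliques). The length of a path is its number of edges. *)

From mathcomp Require Import all_boot.
Set Implicit Arguments. Unset Strict Implicit. Unset Printing Implicit Defensive.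

Definition simple_graph (T : finType) (e : rel T) : Prop :=
  symmetric e /\ irreflexive e.

Definition compl_graph (T : finType) (e : rel T) : rel T :=
  fun x y => (x != y) && ~~ e x y.

Definition has_induced (k : nat) (f : rel 'I_k) (T : finType) (e : rel T) : Prop :=
  exists g : 'I_k -> T, injective g /\ forall i j, e (g i) (g j) = f i j.

Definition claw_rel : rel 'I_4 :=
  fun i j => ((val i == 0) && (val j != 0)) || ((val j == 0) && (val i != 0)).

(* bull: triangle {0,1,2}, pendant 3 at 0, pendant 4 at 1 *)
Definition bull_edge (a b : nat) : bool :=
  [|| (a == 0) && (b == 1), (a == 0) && (b == 2), (a == 1) && (b == 2),
      (a == 0) && (b == 3) | (a == 1) && (b == 4)].
Definition bull_rel : rel 'I_5 :=
  fun i j => bull_edge (val i) (val j) || bull_edge (val j) (val i).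

Definition claw_free (T : finType) (e : rel T) : Prop := ~ has_induced claw_rel e.
Definition bull_free (T : finType) (e : rel T) : Prop := ~ has_induced bull_rel e.

Definition triangle_free (T : finType) (e : rel T) : Prop :=
  forall x y z : T, ~ [&& e x y, e y z & e x z].

Definition complete_bipartite (T : finType) (e : rel T) : Prop :=
  exists A : {set T}, [/\ A != set0, ~: A != set0 &
    forall x y, e x y = ((x \in A) != (y \in A))].

Definition connected_graph (T : finType) (e : rel T) : Prop :=
  (0 < #|T|) /\ forall x y : T, connect e x y.

(* path of length k (k edges, k+1 vertices 0..k) *)
Definition path_rel (k : nat) : rel 'I_k.+1 :=
  fun i j => ((val i).+1 == val j) || ((val j).+1 == val i).

(* cycle of length k (vertices 0..k-1, i ~ i+1 mod k); used for k >= 3 *)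
Definition cycle_rel (k : nat) : rel 'I_k :=
  fun i j => ((val i).+1 %% k == val j) || ((val j).+1 %% k == val i).

(* G is an expansion of F = ('I_n, f): the vertex set is partitioned into
   nonempty cliques K_i = phi^-1(i), with complete adjacency between K_i and
   K_j iff f i j, and none otherwise. *)
Definition expansion_of (n : nat) (f : rel 'I_n) (T : finType) (e : rel T) : Prop :=
  exists phi : T -> 'I_n,
    (forall i : 'I_n, exists x, phi x = i) /\
    (forall x y : T, x != y -> e x y = (phi x == phi y) || f (phi x) (phi y)).

Definition path_expansion_ge4 (T : finType) (e : rel T) : Prop :=
  exists k, 4 <= k /\ expansion_of (@path_rel k) e.

Definition cycle_expansion_ge6 (T : finType) (e : rel T) : Prop :=
  exists k, 6 <= k /\ expansion_of (@cycle_rel k) e.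

From mathcomp Require Import all_boot zify.
Set Implicit Arguments. Unset Strict Implicit. Unset Printing Implicit Defensive.

(* A graph is triangle-free iff its complement has no stable triple.  Claws, bulls
   and expansions of paths of length >= 4 or cycles of length >= 6 all contain stable
   triples, so the complement of a triangle-free graph avoids them; if that
   complement is disconnected, one of its components and the rest are the two sides
   of a complete bipartite graph.

   Conversely, let G be connected, claw-free and bull-free with a stable triple.
   Then G has an induced P5, an expansion of a path of length 4.  Grow a maximal
   set S of vertices inducing an expansion of a path with levels 0..m, m >= 4.  A
   vertex outside S that sees S sees whole levels: either at most three consecutive
   ones, or level 0 only, or level m only (S then grows), or exactly levels 0 and m.
   In a maximal S every outside vertex is of the last kind and they form a clique,
   so G is an expansion of a path (S = V) or of a cycle of length m + 2 >= 6. *)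

(** * Stable triples *)

Definition stable_triple (T : eqType) (e : rel T) (a b c : T) : bool :=
  [&& a != b, a != c, b != c, ~~ e a b, ~~ e a c & ~~ e b c].

Definition has_stable_triple (T : eqType) (e : rel T) : Prop :=
  exists a b c, stable_triple e a b c.

Section StableTriples.
Variables (T : finType) (e : rel T).

Lemma triangle_free_complE : simple_graph e ->
  triangle_free e <-> ~ has_stable_triple (compl_graph e).
Proof.
move=> [esym eirr]; rewrite /stable_triple /compl_graph; split.
  move=> tf [a [b [c /and5P [ab ac bc]]]]; rewrite ab ac bc /= !negbK.
  by move=> eab /andP [eac ebc]; apply: (tf a b c); rewrite eab ebc eac.
move=> nst a b c /and3P [eab ebc eac]; apply: nst; exists a, b, c.
have ne x y : e x y -> x != y by apply: contraTneq => ->; rewrite eirr.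
by rewrite /stable_triple !ne ?eab ?ebc ?eac.
Qed.

Lemma induced_stable_triple k (f : rel 'I_k) :
  has_stable_triple f -> has_induced f e -> has_stable_triple e.
Proof.
move=> [i [j [l st]]] [g [ginj gE]]; exists (g i), (g j), (g l).
by rewrite /stable_triple !(inj_eq ginj) !gE.
Qed.

Lemma expansion_stable_triple n (f : rel 'I_n) :
  has_stable_triple f -> expansion_of f e -> has_stable_triple e.
Proof.
move=> [i [j [l /and5P [ij il jl fij /andP [fil fjl]]]]] [phi [phi_onto phiE]].
have [[[x xi] [y yj]] [z zl]] := (phi_onto i, phi_onto j, phi_onto l).
have ne u v : phi u != phi v -> u != v by apply: contra_neq => ->.
have [xy xz yz] : [/\ x != y, x != z & y != z] by rewrite !ne ?xi ?yj ?zl.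
exists x, y, z; rewrite /stable_triple xy xz yz !phiE // xi yj zl.
by rewrite (negbTE ij) (negbTE il) (negbTE jl) fij fil fjl.
Qed.

Lemma complete_bipartite_triangle_free : complete_bipartite e -> triangle_free e.
Proof.
move=> [A [_ _ eA]] x y z; rewrite !eA.
by case: (x \in A); case: (y \in A); case: (z \in A).
Qed.

Lemma triangle_free_compl_disconnected x y : symmetric e -> triangle_free e ->
  ~~ connect (compl_graph e) x y -> complete_bipartite e.
Proof.
move=> esym tf nxy; pose A := [set z | connect (compl_graph e) x z].
have cross z w : z \in A -> w \notin A -> e z w.
  rewrite !inE => xz xw; have zw : z != w by apply: contraNneq xw => <-.
  apply: contraNT xw => nzw; apply: connect_trans xz (connect1 _).
  by rewrite /compl_graph zw.
have xA : x \in A by rewrite inE connect0.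
have yA : y \notin A by rewrite inE.
exists A; split; [by apply/set0Pn; exists x | by apply/set0Pn; exists y; rewrite inE |].
move=> z w; case: (boolP (z \in A)) => zA; case: (boolP (w \in A)) => wA /=.
- by apply/negP => zw; apply: (tf z w y); rewrite zw !cross.
- exact: cross.
- by rewrite esym cross.
- by apply/negP => zw; apply: (tf x z w); rewrite zw !cross.
Qed.

End StableTriples.

Lemma claw_stable_triple : has_stable_triple claw_rel.
Proof. by exists (@Ordinal 4 1 isT), (@Ordinal 4 2 isT), (@Ordinal 4 3 isT). Qed.

Lemma bull_stable_triple : has_stable_triple bull_rel.
Proof. by exists (@Ordinal 5 2 isT), (@Ordinal 5 3 isT), (@Ordinal 5 4 isT). Qed.

Lemma path_stable_triple k : 4 <= k -> has_stable_triple (@path_rel k).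
Proof.
move=> k4; exists (inord 0), (inord 2), (inord 4).
by rewrite /stable_triple /path_rel -!val_eqE /= !inordK //; lia.
Qed.

Lemma cycle_stable_triple k : 6 <= k -> has_stable_triple (@cycle_rel k).
Proof.
move=> k6; have lt i : i < 6 -> i < k by move=> /leq_trans; apply.
exists (Ordinal (lt 0 isT)), (Ordinal (lt 2 isT)), (Ordinal (lt 4 isT)).
by rewrite /stable_triple /cycle_rel -!val_eqE /= !modn_small //; lia.
Qed.

Lemma connect_exit_edge (T : finType) (e : rel T) (A : {set T}) a b :
  connect e a b -> a \notin A -> b \in A -> exists u v, [/\ u \notin A, v \in A & e u v].
Proof.
move=> /connectP [p + ->] {b}; elim: p a => [|c p IH] a /= ; first by move=> _ /negbTE ->.
move=> /andP [ac cp] aA; case: (boolP (c \in A)) => cA; first by exists a, c.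
exact: IH.
Qed.

(** * Attachment of a vertex to an induced path *)

Definition level_adj (i j : nat) : bool := (i <= j.+1) && (j <= i.+1).

Lemma level_adjC i j : level_adj i j = level_adj j i.
Proof. by rewrite /level_adj andbC. Qed.

Lemma level_adj_far i j : i.+2 <= j -> level_adj i j = false.
Proof. by rewrite /level_adj; lia. Qed.

Definition agree_upto (m : nat) (c d : nat -> bool) : Prop :=
  forall j, j <= m -> c j = d j.

(* The possible neighbourhoods of an outside vertex on an induced path r_0 .. r_m;
   only the last one, seeing both ends, does not extend the path. *)
Definition attach_shape (m : nat) (c : nat -> bool) : Prop :=
  [\/ exists2 t, t <= m & agree_upto m c (level_adj t),
      agree_upto m c (pred1 0),
      agree_upto m c (pred1 m) |
      agree_upto m c (fun j => (j == 0) || (j == m))].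

(* [c j] says whether an outside vertex x sees r_j, on an induced path r_0 .. r_m;
   each hypothesis excludes an induced claw or bull on x and a few r_j. *)
Section AttachShape.
Variables (m : nat) (c : nat -> bool).
Hypothesis m_ge4 : 4 <= m.
Hypothesis claw_x : forall i j k, i.+2 <= j -> j.+2 <= k -> k <= m ->
  c i -> c j -> c k -> False.
Hypothesis claw_path : forall j, 0 < j < m -> c j -> ~~ c j.-1 -> ~~ c j.+1 -> False.
Hypothesis bull_path : forall j, 0 < j -> j.+2 <= m ->
  c j -> c j.+1 -> ~~ c j.-1 -> ~~ c j.+2 -> False.
Hypothesis bull_right : forall j k, j.+2 <= m -> k <= m -> (k.+2 <= j) || (j.+4 <= k) ->
  c j -> c j.+1 -> ~~ c j.+2 -> c k -> False.
Hypothesis bull_left : forall j k, 0 < j < m -> k <= m -> (k.+3 <= j) || (j.+3 <= k) ->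
  c j -> c j.+1 -> ~~ c j.-1 -> c k -> False.

Lemma attach_0_2_3 : c 0 -> c 2 -> c 3 -> False.
Proof.
move=> c0 c2 c3; case: (boolP (c 4)) => c4; first exact: (claw_x (j := 2) _ _ _ c0 c2 c4).
by apply: (bull_right (j := 2) (k := 0)) => //; lia.
Qed.

Lemma attach_run_end t : t.+2 <= m -> c t -> c t.+1 -> c t.+2 ->
  (t = 0) \/ ~~ c t.-1 -> forall j, t.+3 <= j <= m -> ~~ c j.
Proof.
move=> tm ct ct1 ct2 tleft j /andP [tj jm]; apply/negP => cj.
have [t4j | jt3] := leqP t.+4 j; first exact: (claw_x _ _ jm ct ct2 cj).
have {jt3 tj} j3 : j = t.+3 by lia.
subst j.
case: t tleft tm jm ct ct1 ct2 cj => [_ _ _ c0 _ c2 c3 | t [//|ctl] tm jm *].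
  exact: attach_0_2_3.
by apply: (bull_left (j := t.+1) (k := t.+4)) => //; lia.
Qed.

Lemma attach_from0_adj1 : c 0 -> c 1 -> attach_shape m c.
Proof.
move=> c0 c1; apply: Or41; case: (boolP (c 2)) => c2.
  exists 1; first lia.
  move=> j jm; case: (leqP j 2) => j2; first by case: j j2 {jm} => [|[|[|]]].
  by rewrite (negbTE (attach_run_end _ c0 c1 c2 (or_introl erefl) _)) /level_adj; lia.
exists 0 => // j jm; case: (leqP j 2) => j2.
  by case: j j2 {jm} => [|[|[|[|]]]] //=; rewrite (negbTE c2).
have -> : level_adj 0 j = false by rewrite /level_adj; lia.
apply/negbTE/negP => cj; case: (leqP 4 j) => j4.
  by apply: (bull_right (j := 0) (k := j)) => //; lia.
have {j2 j4} j3 : j = 3 by lia.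
subst j; case: (boolP (c 4)) => c4.
  by apply: (bull_right (j := 0) (k := 4)) => //; lia.
by apply: (claw_path (j := 3)) => //; lia.
Qed.

Lemma attach_from0_nadj1 : c 0 -> ~~ c 1 -> attach_shape m c.
Proof.
move=> c0 nc1; have mid j : 2 <= j < m -> ~~ c j.
  move=> /andP [j2 jm]; apply/negP => cj.
  have [i [i2 im ci ci1]] : exists i, [/\ 2 <= i, i < m, c i & c i.+1].
    case: (boolP (c j.+1)) => cj1; first by exists j.
    case: (boolP (c j.-1)) => cjl; last by exfalso; apply: (claw_path (j := j)) => //; lia.
    have j3 : j.-1 != 1 by apply: contraTneq cjl => ->.
    have jp : j.-1.+1 = j by lia.
    by exists j.-1; rewrite jp; split=> //; lia.
  case: (boolP (c i.-1)) => cil.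
    have i3 : i.-1 != 1 by apply: contraTneq cil => ->.
    by apply: (claw_x (i := 0) (j := i.-1) (k := i.+1)) => //; lia.
  have [i2' | i3] := leqP i 2.
    have i2eq : i = 2 by lia.
    by subst i; exact: attach_0_2_3.
  by apply: (bull_left (j := i) (k := 0)) => //; lia.
have cE j : 0 < j < m -> c j = false.
  move=> /andP [j0 jm]; case: (eqVneq j 1) => [-> | j1]; first exact/negbTE.
  by apply/negbTE/mid; lia.
case: (boolP (c m)) => cm; [apply: Or44 | apply: Or42] => j jm /=;
  case: (posnP j) => [-> // | j0]; case: (eqVneq j m) => [-> | jnm].
- by rewrite cm; lia.
- by rewrite cE; lia.
- by apply/negbTE.
- by rewrite cE; lia.
Qed.

Lemma attach_shapeP : (exists2 j, j <= m & c j) -> attach_shape m c.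
Proof.
move=> [j0 j0m cj0]; have ex : exists j, (j <= m) && c j by exists j0; rewrite j0m.
case: (ex_minnP ex) => t /andP [tm ct] tmin.
have below j : j < t -> ~~ c j.
  move=> jt; apply/negP => cj.
  by have := tmin j; rewrite cj andbT (leq_trans (ltnW jt) tm) => /(_ isT); lia.
case: (posnP t) => [t0 | t_gt0].
  move: ct; rewrite t0 => c0; case: (boolP (c 1)) => c1.
    exact: attach_from0_adj1.
  exact: attach_from0_nadj1.
have ctl : ~~ c t.-1 by apply: below; lia.
case: (eqVneq t m) => [tm' | tnm].
  apply: Or43 => j jm /=; case: (eqVneq j m) => [-> | jnm]; first by rewrite -tm'.
  by apply/negbTE/below; lia.
have ct1 : c t.+1.
  by apply/negPn/negP => nct1; apply: (claw_path (j := t)) => //; lia.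
apply: Or41; case: (eqVneq t.+1 m) => [t1m | t1nm].
  exists m => // j jm; case: (ltnP j t) => jt.
    by rewrite (negbTE (below _ jt)) /level_adj; lia.
  have [-> | ->] : j = t \/ j = t.+1 by lia.
    by rewrite ct /level_adj; lia.
  by rewrite ct1 /level_adj; lia.
have ct2 : c t.+2.
  by apply/negPn/negP => nct2; apply: (bull_path (j := t)) => //; lia.
exists t.+1; first lia.
move=> j jm; case: (ltnP j t) => jt.
  by rewrite (negbTE (below _ jt)) /level_adj; lia.
case: (leqP j t.+2) => jt2.
  have [-> | [-> | ->]] : j = t \/ j = t.+1 \/ j = t.+2 by lia.
  - by rewrite ct /level_adj; lia.
  - by rewrite ct1 /level_adj; lia.
  - by rewrite ct2 /level_adj; lia.
by rewrite (negbTE (attach_run_end _ ct ct1 ct2 (or_intror ctl) _)) /level_adj; lia.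
Qed.

End AttachShape.

Section ClawBullFree.
Variables (T : finType) (E : rel T).
Hypotheses (Esym : symmetric E) (Eirr : irreflexive E)
  (clawF : claw_free E) (bullF : bull_free E).

Lemma edge_neq a b : E a b -> a != b.
Proof. by apply: contraTneq => ->; rewrite Eirr. Qed.

Lemma edge_nonedge_neq a b y : E a y -> ~~ E b y -> a != b.
Proof. by move=> ay; apply: contraNneq => <-. Qed.

(* Edge hypotheses are irrelevant to [lia] and only slow it down. *)
Ltac lia_levels := repeat match goal with
  | H : is_true (E _ _) |- _ => clear H
  | H : is_true (~~ E _ _) |- _ => clear H
  end; lia.

Ltac edge_side := solve [ done | by rewrite Eirr | by apply/negbTE
  | by rewrite Esym | by rewrite Esym; apply/negbTE ].

Lemma no_claw a b c d : E a b -> E a c -> E a d ->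
  ~~ E b c -> ~~ E b d -> ~~ E c d -> b != c -> b != d -> c != d -> False.
Proof.
move=> ab ac ad bc bd cd nbc nbd ncd.
have nab := edge_neq ab; have nac := edge_neq ac; have nad := edge_neq ad.
apply: clawF; exists (fun i : 'I_4 => nth a [:: a; b; c; d] i); split.
  move=> [[|[|[|[|i]]]] Hi] [[|[|[|[|j]]]] Hj] //= eij; apply: val_inj => //=;
  move: nab nac nad nbc nbd ncd; rewrite eij ?eqxx //.
by move=> [[|[|[|[|i]]]] Hi] [[|[|[|[|j]]]] Hj] //=; rewrite /claw_rel /=; edge_side.
Qed.

Lemma no_bull v0 v1 v2 v3 v4 : E v0 v1 -> E v0 v2 -> E v1 v2 ->
  E v0 v3 -> ~~ E v1 v3 -> ~~ E v2 v3 ->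
  E v1 v4 -> ~~ E v0 v4 -> ~~ E v2 v4 -> ~~ E v3 v4 -> False.
Proof.
move=> e01 e02 e12 e03 e13 e23 e14 e04 e24 e34.
have n01 := edge_neq e01; have n02 := edge_neq e02; have n12 := edge_neq e12.
have n03 := edge_neq e03; have n14 := edge_neq e14.
have n13 : v1 != v3 by apply: (edge_nonedge_neq e12); rewrite Esym.
have n23 : v2 != v3 by apply: (edge_nonedge_neq (y := v1)); rewrite Esym // Esym.
have n24 : v2 != v4 by apply: (edge_nonedge_neq (y := v0)); rewrite Esym // Esym.
have n04 : v0 != v4 by apply: (edge_nonedge_neq e02); rewrite Esym.
have n34 : v3 != v4 by apply: (edge_nonedge_neq (y := v0)); rewrite Esym // Esym.
apply: bullF; exists (fun i : 'I_5 => nth v0 [:: v0; v1; v2; v3; v4] i); split.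
  move=> [[|[|[|[|[|i]]]]] Hi] [[|[|[|[|[|j]]]]] Hj] //= eij; apply: val_inj => //=;
  move: n01 n02 n12 n03 n14 n13 n23 n24 n04 n34; rewrite eij ?eqxx //.
by move=> [[|[|[|[|[|i]]]]] Hi] [[|[|[|[|[|j]]]]] Hj] //=; rewrite /bull_rel /=; edge_side.
Qed.

Section PathAttachment.
Variables (m : nat) (r : nat -> T) (x : T).
Hypotheses (r_inj : forall i j, i <= m -> j <= m -> i != j -> r i != r j)
  (r_adj : forall i j, i <= m -> j <= m -> i != j -> E (r i) (r j) = level_adj i j)
  (r_x : forall i, i <= m -> r i != x).

Ltac path_side := first
  [ done | by rewrite Esym
  | by rewrite r_adj /level_adj; lia_levels
  | by rewrite Esym r_adj /level_adj; lia_levels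
  | by apply: r_inj; lia_levels
  | by apply: r_x; lia_levels
  | by rewrite eq_sym; apply: r_x; lia_levels ].

Lemma attach_shape_path : 4 <= m -> (exists2 j, j <= m & E x (r j)) ->
  attach_shape m (fun j => E x (r j)).
Proof.
move=> m4; apply: attach_shapeP => //.
- move=> i j k ij jk km xi xj xk.
  by apply: (@no_claw x (r i) (r j) (r k)); path_side.
- move=> j /andP [j0 jm] xj nxl nxr.
  by apply: (@no_claw (r j) (r j.-1) (r j.+1) x); path_side.
- move=> j j0 jm xj xj1 nxl nxr.
  by apply: (@no_bull (r j) (r j.+1) x (r j.-1) (r j.+2)); path_side.
- move=> j k jm km jk xj xj1 nxr xk.
  by apply: (@no_bull (r j.+1) x (r j) (r j.+2) (r k)); path_side.
- move=> j k /andP [j0 jm] km jk xj xj1 nxl xk.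
  by apply: (@no_bull (r j) x (r j.+1) (r j.-1) (r k)); path_side.
Qed.

End PathAttachment.

(** * Path layerings *)

(* [S] induces an expansion of the path 0 - 1 - ... - m, level [i] being the clique
   that replaces vertex [i]. *)
Record path_layering (S : {set T}) (lvl : T -> nat) (m : nat) : Prop := PathLayering {
  layer_le : forall y, y \in S -> lvl y <= m;
  layer_inhabited : forall i, i <= m -> exists2 y, y \in S & lvl y = i;
  layer_adj : forall y z, y \in S -> z \in S -> y != z ->
    E y z = level_adj (lvl y) (lvl z) }.

Definition closes (S : {set T}) (lvl : T -> nat) (m : nat) (x : T) : bool :=
  [forall y in S, E x y == (lvl y == 0) || (lvl y == m)].

(* Preferring neighbours of [x] makes [x] see a level as soon as it sees one of its
   vertices; the default [x] is never returned for an inhabited level. *)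
Definition level_rep (S : {set T}) (lvl : T -> nat) (x : T) (j : nat) : T :=
  if [pick y in S | (lvl y == j) && E x y] is Some y then y
  else odflt x [pick y in S | lvl y == j].

Section Layering.
Variables (S : {set T}) (lvl : T -> nat) (m : nat) (x : T).
Hypotheses (L : path_layering S lvl m) (m_ge4 : 4 <= m) (xS : x \notin S).

Local Notation r := (level_rep S lvl x).

Lemma level_rep_spec j : j <= m -> r j \in S /\ lvl (r j) = j.
Proof.
rewrite /level_rep => jm; case: pickP => [y /and3P [yS /eqP <-] // | _].
case: pickP => [y /andP [yS /eqP <-] // | none].
by have [y yS yj] := layer_inhabited L jm; have := none y; rewrite yS yj eqxx.
Qed.

Lemma level_rep_adj y : y \in S -> E x y -> E x (r (lvl y)).
Proof.
move=> yS xy; rewrite /level_rep; case: pickP => [z /and3P [] // | none].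
by have := none y; rewrite yS eqxx xy.
Qed.

Lemma level_rep_inj i j : i <= m -> j <= m -> i != j -> r i != r j.
Proof.
move=> im jm; apply: contra_neq => rij.
by have [_ <-] := level_rep_spec im; rewrite rij; have [_ ->] := level_rep_spec jm.
Qed.

Lemma level_rep_edgeE i j : i <= m -> j <= m -> i != j -> E (r i) (r j) = level_adj i j.
Proof.
move=> im jm ij; have [ri li] := level_rep_spec im; have [rj lj] := level_rep_spec jm.
by rewrite (layer_adj L) ?li ?lj ?level_rep_inj.
Qed.

Lemma level_rep_neq i : i <= m -> r i != x.
Proof. by move=> im; apply: contraNneq xS => <-; have [] := level_rep_spec im. Qed.

(* [y] is a vertex of a level whose representative [x] sees while [x] does not see
   [y]; every attachment shape then yields an induced claw or bull. *)
Section Twin.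
Variable y : T.
Hypotheses (yS : y \in S) (xry : E x (r (lvl y))) (nxy : ~~ E x y).

Let ym : lvl y <= m. Proof. exact: (layer_le L yS). Qed.

Lemma twin_neq k : k <= m -> y != r k.
Proof.
move=> km; case: (eqVneq k (lvl y)) => [-> | ky]; first by apply: contraNneq nxy => ->.
by apply: contra_neq ky => ->; have [_ ->] := level_rep_spec km.
Qed.

Lemma twin_edgeE k : k <= m -> E y (r k) = level_adj (lvl y) k.
Proof.
by move=> km; have [rk lk] := level_rep_spec km; rewrite (layer_adj L) ?lk ?twin_neq.
Qed.

Lemma twin_neq_x : y != x.
Proof. by apply: contraNneq xS => <-. Qed.

Ltac twin_side := first
  [ done | by rewrite Esym | by rewrite eq_sym
  | match goal with xE : forall k, _ -> E x (r k) = _ |- _ =>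
      by rewrite ?(Esym (r _) x) ?(Esym (r _) y) ?xE ?twin_edgeE ?level_rep_edgeE
           /level_adj; lia_levels end
  | by rewrite ?(Esym (r _) y) ?twin_edgeE ?level_rep_edgeE /level_adj; lia_levels
  | by apply: level_rep_inj; lia_levels
  | by apply: level_rep_neq; lia_levels | by rewrite eq_sym; apply: level_rep_neq; lia_levels
  | by apply: twin_neq; lia_levels | by rewrite eq_sym; apply: twin_neq; lia_levels
  | exact: twin_neq_x | by rewrite eq_sym; exact: twin_neq_x ].

Lemma twin_interval t : t <= m -> agree_upto m (fun k => E x (r k)) (level_adj t) ->
  level_adj t (lvl y) -> False.
Proof.
move=> tm; rewrite /agree_upto => xE; have [j jy] : exists j, lvl y = j by exists (lvl y).
have jm : j <= m by rewrite -jy; exact: ym.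
rewrite jy => ty.
case: (eqVneq j t) => [jt | jnt].
  case: (leqP j.+2 m) => j2.
    by apply: (@no_claw (r j.+1) y x (r j.+2)); twin_side.
  by apply: (@no_claw (r j.-1) y x (r j.-2)); twin_side.
case: (eqVneq t j.+1) => [tj | tnj].
  case: (leqP j.+3 m) => j3.
    by apply: (@no_bull (r j.+1) (r j.+2) x y (r j.+3)); twin_side.
  by apply: (@no_bull (r j) (r j.-1) y x (r j.-2)); twin_side.
have tj : t = j.-1 by move: ty; rewrite /level_adj; lia_levels.
case: (leqP 3 j) => j3.
  by apply: (@no_bull (r j.-1) (r j.-2) x y (r (j - 3))); twin_side.
by apply: (@no_bull (r j) (r j.+1) y x (r j.+2)); twin_side.
Qed.

Lemma twin_end0 : ~~ E x (r 1) -> ~~ E x (r 2) -> lvl y = 0 -> False.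
Proof.
move=> nx1 nx2 y0; move: xry; rewrite y0 => x0.
by apply: (@no_bull (r 0) (r 1) y x (r 2)); twin_side.
Qed.

Lemma twin_endm : ~~ E x (r m.-1) -> ~~ E x (r m.-2) -> lvl y = m -> False.
Proof.
move=> nx1 nx2 y0; move: xry; rewrite y0 => x0.
by apply: (@no_bull (r m) (r m.-1) y x (r m.-2)); twin_side.
Qed.

Lemma twin_shape : attach_shape m (fun k => E x (r k)) -> False.
Proof.
have xy d : agree_upto m (fun k => E x (r k)) d -> d (lvl y) by move=> xE; rewrite -xE.
case=> [[t tm xE] | xE | xE | xE]; have := xy _ xE; move: xE; rewrite /agree_upto /=.
- by move=> xE; exact: (twin_interval tm xE).
- by move=> xE /eqP; apply: twin_end0; rewrite xE //; lia_levels.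
- by move=> xE /eqP; apply: twin_endm; rewrite xE //; lia_levels.
- by move=> xE /orP [] /eqP; [apply: twin_end0 | apply: twin_endm]; rewrite xE //; lia_levels.
Qed.

End Twin.

Lemma attach_uniform : (exists2 y, y \in S & E x y) ->
  exists2 c, attach_shape m c & forall y, y \in S -> E x y = c (lvl y).
Proof.
move=> [y0 y0S xy0]; have shape : attach_shape m (fun k => E x (r k)).
  apply: attach_shape_path => //.
  - exact: level_rep_inj.
  - exact: level_rep_edgeE.
  - exact: level_rep_neq.
  - by exists (lvl y0); [exact: (layer_le L) | exact: level_rep_adj].
exists (fun k => E x (r k)) => // y yS; apply/idP/idP; first exact: level_rep_adj.
by apply: contraLR => nxy; apply/negP => xry; exact: (twin_shape yS xry nxy).
Qed.

End Layering.

Lemma layering_add S lvl m x (f : nat -> nat) (tx m' : nat) :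
  path_layering S lvl m -> x \notin S ->
  (forall i, i <= m -> f i <= m') -> tx <= m' ->
  (forall i, i <= m' -> i = tx \/ exists2 j, j <= m & f j = i) ->
  (forall i j, i <= m -> j <= m -> level_adj (f i) (f j) = level_adj i j) ->
  (forall y, y \in S -> E x y = level_adj tx (f (lvl y))) ->
  path_layering (x |: S) (fun z => if z == x then tx else f (lvl z)) m'.
Proof.
move=> [le inh adj] xS fm txm f_onto f_adj xE; split.
- move=> y; rewrite in_setU1; case: (eqVneq y x) => //= _ yS.
  exact/fm/le.
- move=> i /f_onto [-> | [j jm <-]]; first by exists x; rewrite ?setU11 ?eqxx.
  have [y yS <-] := inh j jm; exists y; first by rewrite in_setU1 yS orbT.
  by case: eqVneq => // yx; rewrite -yx yS in xS.
- move=> y z; rewrite !in_setU1.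
  case: (eqVneq y x) => [-> | yx]; case: (eqVneq z x) => [-> | zx] //= yS zS yz.
  + by rewrite xE.
  + by rewrite Esym xE // level_adjC.
  + by rewrite f_adj ?le // adj.
Qed.

Lemma layering_grow S lvl m x : path_layering S lvl m -> 4 <= m -> x \notin S ->
  (exists2 y, y \in S & E x y) ->
  (exists lvl' m', 4 <= m' /\ path_layering (x |: S) lvl' m') \/ closes S lvl m x.
Proof.
move=> L m4 xS /(attach_uniform L m4 xS) [c shape xE]; have le := layer_le L.
case: shape => [[t tm cE] | cE | cE | cE].
- left; exists (fun z => if z == x then t else id (lvl z)), m; split => //.
  apply: (layering_add (f := id) L xS) => // [i im | y yS]; first by right; exists i.
  by rewrite xE // -cE ?le.
- left; exists (fun z => if z == x then 0 else (lvl z).+1), m.+1; split; first lia_levels.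
  apply: (layering_add (f := succn) L xS) => // [i im | y yS].
    by case: i im => [|i] im; [left | right; exists i].
  by rewrite xE // cE ?le //= /level_adj; lia_levels.
- left; exists (fun z => if z == x then m.+1 else id (lvl z)), m.+1; split; first lia_levels.
  apply: (layering_add (f := id) L xS) => // [i im | i im | y yS]; first lia_levels.
    by case: (eqVneq i m.+1) => [-> | im']; [left | right; exists i => //; lia_levels].
  by rewrite xE // cE ?le //= /level_adj; have := le y yS; lia_levels.
- by right; apply/forall_inP => y yS; rewrite xE // cE ?le.
Qed.

Lemma maximal_layering S lvl m : path_layering S lvl m -> 4 <= m ->
  exists S' lvl' m', [/\ 4 <= m', path_layering S' lvl' m' &
    forall x, x \notin S' -> (exists2 y, y \in S' & E x y) -> closes S' lvl' m' x].
Proof.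
move: {2}#|~: S| (leqnn #|~: S|) => n; elim: n S lvl m => [|n IH] S lvl m Sn L m4.
  exists S, lvl, m; split => // x xS; move: Sn; rewrite leqn0 cards_eq0 => /eqP S0.
  by have := xS; rewrite -in_setC S0 in_set0.
case: (pickP [pred x | [&& x \notin S, [exists y in S, E x y] & ~~ closes S lvl m x]]).
  move=> x /and3P [xS /exists_inP xN ncl].
  case: (layering_grow L m4 xS xN) => [[lvl' [m' [m'4 L']]] | cl]; last by rewrite cl in ncl.
  apply: IH L' m'4; rewrite -ltnS; apply: leq_trans Sn; apply: proper_card.
  rewrite setCU properEneq subsetIr andbT; apply/eqP => /setP /(_ x).
  by rewrite !inE eqxx xS.
move=> maxl; exists S, lvl, m; split => // x xS /exists_inP xN.
by have := maxl x; rewrite /= xS xN /= => /negbFE.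
Qed.

Section MaximalLayering.
Variables (S : {set T}) (lvl : T -> nat) (m : nat).
Hypotheses (conn : forall a b, connect E a b) (L : path_layering S lvl m) (m_ge4 : 4 <= m)
  (maxl : forall x, x \notin S -> (exists2 y, y \in S & E x y) -> closes S lvl m x).

Let closesE x y : x \notin S -> (exists2 y, y \in S & E x y) -> y \in S ->
  E x y = (lvl y == 0) || (lvl y == m).
Proof. by move=> xS xN yS; apply/eqP; move/forall_inP: (maxl xS xN); apply. Qed.

Lemma outside_neighbour z : z \notin S -> exists2 y, y \in S & E z y.
Proof.
move=> zS; apply/exists_inP; apply: contraT => zN; exfalso.
have [a0 a0S a0l] := layer_inhabited L (leq0n m).
pose A := [set w | (w \in S) || [exists y in S, E w y]].
have zA : z \notin A by rewrite inE negb_or zS.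
have a0A : a0 \in A by rewrite inE a0S.
have [u [v [uA vA uv]]] := connect_exit_edge (conn z a0) zA a0A.
move: uA; rewrite inE negb_or => /andP [uS uN].
have u_nonadj y : y \in S -> ~~ E u y.
  by move=> yS; apply: contra uN => uy; apply/exists_inP; exists y.
have vS : v \notin S by apply: contraL uv; apply: u_nonadj.
have vN : exists2 y, y \in S & E v y by move: vA; rewrite inE (negbTE vS) => /exists_inP.
have [am amS aml] := layer_inhabited L (leqnn m).
have a0m : a0 != am by apply/eqP => a0m; move: m_ge4; rewrite -aml -a0m a0l.
apply: (@no_claw v u a0 am); rewrite ?u_nonadj //.
- by rewrite Esym.
- by rewrite closesE // a0l.
- by rewrite closesE // aml eqxx orbT.
- by rewrite (layer_adj L) // a0l aml level_adj_far // ltnW // ltnW.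
- by apply: contraNneq uS => ->.
- by apply: contraNneq uS => ->.
Qed.

Lemma outside_clique z z' : z \notin S -> z' \notin S -> z != z' -> E z z'.
Proof.
move=> zS z'S zz'; apply: contraT => nzz'; exfalso.
have [a0 a0S a0l] := layer_inhabited L (leq0n m).
have [a1 a1S a1l] := layer_inhabited L (leq_trans (isT : 1 <= 4) m_ge4).
have zN := outside_neighbour zS; have z'N := outside_neighbour z'S.
apply: (@no_claw a0 z z' a1) => //.
- by rewrite Esym closesE // a0l.
- by rewrite Esym closesE // a0l.
- rewrite (layer_adj L) ?a0l ?a1l //.
  by apply/eqP => a01; move: a1l; rewrite -a01 a0l.
- by rewrite closesE // a1l; lia_levels.
- by rewrite closesE // a1l; lia_levels.
- by apply: contraNneq zS => ->.
- by apply: contraNneq z'S => ->.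
Qed.

Lemma layering_path_expansion : (forall z, z \in S) -> path_expansion_ge4 E.
Proof.
move=> allS; exists m; split => //; exists (fun z => inord (lvl z)); split.
  move=> i; have [y yS yi] := layer_inhabited L (ltn_ord i).
  by exists y; apply: val_inj; rewrite /= inordK yi // ltnS.
move=> a b ab; rewrite (layer_adj L) ?allS // /path_rel -val_eqE /= !inordK ?ltnS;
  by rewrite ?(layer_le L) ?allS // /level_adj; lia_levels.
Qed.

(* The outside vertices form one more level, closing the path into a cycle. *)
Lemma layering_cycle_expansion z0 : z0 \notin S -> cycle_expansion_ge6 E.
Proof.
move=> z0S; exists m.+2; split; first lia_levels.
pose lab z := if z \in S then lvl z else m.+1.
have lab_lt z : lab z < m.+2.
  by rewrite /lab; case: ifP => zS //; have := layer_le L zS; lia_levels.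
exists (fun z => inord (lab z)); split.
  move=> i; case: (leqP i m) => im.
    have [y yS yi] := layer_inhabited L im.
    by exists y; apply: val_inj; rewrite /= inordK // /lab yS yi.
  exists z0; apply: val_inj; rewrite /= inordK // /lab (negbTE z0S).
  by have := ltn_ord i; lia_levels.
move=> a b ab; rewrite /cycle_rel -val_eqE /= !inordK // /lab.
have [le N] := (layer_le L, outside_neighbour).
case: (boolP (a \in S)) => aS; case: (boolP (b \in S)) => bS.
- have la := le a aS; have lb := le b bS.
  by rewrite (layer_adj L) // /level_adj !modn_small; lia_levels.
- have la := le a aS; rewrite modnn modn_small; last lia_levels.
  by rewrite Esym closesE //; [lia_levels | exact: N].
- have lb := le b bS; rewrite modnn modn_small; last lia_levels.
  by rewrite closesE //; [lia_levels | exact: N].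
- by rewrite outside_clique // eqxx.
Qed.

Lemma maximal_layering_expansion : path_expansion_ge4 E \/ cycle_expansion_ge6 E.
Proof.
case: (pickP [pred z | z \notin S]) => [z0 /= z0S | allS].
  by right; exact: layering_cycle_expansion z0S.
by left; apply: layering_path_expansion => z; apply/negbFE/allS.
Qed.

End MaximalLayering.

(** * An induced P5 from a stable triple *)

Definition has_P5_expansion : Prop := exists S lvl, path_layering S lvl 4.

Lemma induced_P5 (a b c d f : T) : E a b -> E b c -> E c d -> E d f ->
  ~~ E a c -> ~~ E a d -> ~~ E a f -> ~~ E b d -> ~~ E b f -> ~~ E c f -> has_P5_expansion.
Proof.
move=> ab bc cd df ac ad af bd bf cf.
have nab := edge_neq ab; have nbc := edge_neq bc; have ncd := edge_neq cd.
have ndf := edge_neq df.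
have nac : a != c by rewrite eq_sym; apply: (edge_nonedge_neq cd).
have nad : a != d by rewrite eq_sym; apply: (edge_nonedge_neq df).
have naf : a != f by rewrite eq_sym; apply: (edge_nonedge_neq (y := d)); rewrite // Esym.
have nbd : b != d by rewrite eq_sym; apply: (edge_nonedge_neq df).
have nbf : b != f by rewrite eq_sym; apply: (edge_nonedge_neq (y := d)); rewrite // Esym.
have ncf : c != f by apply: (edge_nonedge_neq (y := b)); rewrite Esym.
pose s := [:: a; b; c; d; f].
have s_uniq : uniq s by rewrite /s /= !inE !negb_or nab nac nad naf nbc nbd nbf ncd ncf ndf.
exists [set z in s], (index^~ s); split.
- by move=> y; rewrite in_set -index_mem.
- move=> i i4; exists (nth a s i); first by rewrite in_set mem_nth.
  by rewrite index_uniq.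
move=> y z; rewrite !in_set => ys zs yz.
have iy := index_mem y s; have iz := index_mem z s; rewrite ys in iy; rewrite zs in iz.
have nyz : index y s != index z s.
  by apply: contra_neq yz => iyz; rewrite -(nth_index a ys) iyz nth_index.
rewrite -{1}(nth_index a ys) -{1}(nth_index a zs).
move: (index y s) (index z s) iy iz nyz => [|[|[|[|[|i]]]]] [|[|[|[|[|j]]]]] //= _ _ _;
  rewrite /level_adj /=; edge_side.
Qed.

Ltac sym_side := first [ done | by rewrite Esym | by rewrite eq_sym ].

Lemma P5_of_common_neighbours a b c u v w : stable_triple E a b c ->
  E a u -> E b u -> E b v -> E c v -> E a w -> E c w -> has_P5_expansion.
Proof.
move=> /and5P [nab nac nbc ab /andP [ac bc]] au bu bv cv aw cw.
have uc : ~~ E u c by apply/negP => uc; apply: (@no_claw u a b c); sym_side.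
have va : ~~ E v a by apply/negP => va; apply: (@no_claw v b c a); sym_side.
have wb : ~~ E w b by apply/negP => wb; apply: (@no_claw w a c b); sym_side.
case: (boolP (E u v)) => uv; last by apply: (@induced_P5 a u b v c); sym_side.
case: (boolP (E v w)) => vw; last by apply: (@induced_P5 b v c w a); sym_side.
case: (boolP (E u w)) => uw; last by apply: (@induced_P5 c w a u b); sym_side.
by exfalso; apply: (@no_bull u w a b c); sym_side.
Qed.

Definition cl_nbhd (D : {set T}) : {set T} := [set z | [exists y in D, (y == z) || E y z]].

Lemma cl_nbhdP (D : {set T}) z : reflect (z \in D \/ exists2 y, y \in D & E y z) (z \in cl_nbhd D).
Proof.
rewrite inE; apply: (iffP exists_inP) => [[y yD /orP [/eqP <- | yz]] | [zD | [y yD yz]]].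
- by left.
- by right; exists y.
- by exists z; rewrite ?eqxx.
- by exists y; rewrite ?yz ?orbT.
Qed.

Lemma cl_nbhd_sub (D : {set T}) z : z \in D -> z \in cl_nbhd D.
Proof. by move=> zD; apply/cl_nbhdP; left. Qed.

Lemma cl_nbhd_nonadj (D : {set T}) y z : y \in D -> z \notin cl_nbhd D -> ~~ E y z.
Proof. by move=> yD; apply: contra => yz; apply/cl_nbhdP; right; exists y. Qed.

Lemma P5_of_P4_exit a b c d u v : E a b -> E b c -> E c d ->
  ~~ E a c -> ~~ E a d -> ~~ E b d ->
  u \notin cl_nbhd [set a; b; c; d] -> v \in cl_nbhd [set a; b; c; d] -> E u v -> has_P5_expansion.
Proof.
move=> ab bc cd ac ad bd uN vN uv.
have u_far p : p \in [set a; b; c; d] -> (u != p) && ~~ E p u.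
  move=> pP; apply: contraR uN; rewrite negb_and !negbK => /orP [/eqP -> | pu].
    by apply/cl_nbhdP; left.
  by apply/cl_nbhdP; right; exists p.
have /andP [ua au] : (u != a) && ~~ E a u by apply: u_far; rewrite !inE eqxx ?orbT.
have /andP [ub bu] : (u != b) && ~~ E b u by apply: u_far; rewrite !inE eqxx ?orbT.
have /andP [uc cu] : (u != c) && ~~ E c u by apply: u_far; rewrite !inE eqxx ?orbT.
have /andP [ud du] : (u != d) && ~~ E d u by apply: u_far; rewrite !inE eqxx ?orbT.
have v_ne p : ~~ E p u -> v != p by move=> pu; apply: contraNneq pu => <-; rewrite Esym.
have va := v_ne a au; have vb := v_ne b bu; have vc := v_ne c cu; have vd := v_ne d du.
have vu : E v u by rewrite Esym.
have nac : a != c by rewrite eq_sym; apply: (edge_nonedge_neq cd).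
have nad : a != d by apply: (edge_nonedge_neq ab); rewrite Esym.
have nbd : b != d by apply: (edge_nonedge_neq (y := a)); rewrite Esym.
case: (boolP (E v a)) => eva; case: (boolP (E v b)) => evb;
  case: (boolP (E v c)) => evc; case: (boolP (E v d)) => evd.
all: try by exfalso; apply: (@no_claw v u a c); sym_side.
all: try by exfalso; apply: (@no_claw v u a d); sym_side.
all: try by exfalso; apply: (@no_claw v u b d); sym_side.
- by exfalso; apply: (@no_bull v b a u c); sym_side.
- by apply: (@induced_P5 u v a b c); sym_side.
- by exfalso; apply: (@no_bull b c v a d); sym_side.
- by exfalso; apply: (@no_claw b a c v); sym_side.
- by exfalso; apply: (@no_bull v c d u b); sym_side.
- by exfalso; apply: (@no_claw c b d v); sym_side.
- by apply: (@induced_P5 u v d c b); sym_side.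
- case/cl_nbhdP: vN => [| [p]].
    by rewrite !inE (negbTE va) (negbTE vb) (negbTE vc) (negbTE vd).
  by rewrite !inE -!orbA => /or4P [] /eqP -> pv;
    [move: eva | move: evb | move: evc | move: evd]; rewrite Esym pv.
Qed.

Lemma P5_of_P4_far_vertex a b c d z : (forall x y, connect E x y) ->
  E a b -> E b c -> E c d -> ~~ E a c -> ~~ E a d -> ~~ E b d ->
  a != z -> d != z -> ~~ E a z -> ~~ E d z -> has_P5_expansion.
Proof.
move=> conn ab bc cd ac ad bd naz ndz az dz.
have nbz : b != z by apply: (edge_nonedge_neq (y := a)); rewrite Esym.
have ncz : c != z by apply: (edge_nonedge_neq (y := d)); rewrite // Esym.
have nac : a != c by rewrite eq_sym; apply: (edge_nonedge_neq cd).
have nbd : b != d by apply: (edge_nonedge_neq (y := a)); rewrite Esym.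
have zb : ~~ E z b.
  apply/negP => zb; case: (boolP (E z c)) => zc.
    by apply: (@no_bull b c z a d); sym_side.
  by apply: (@no_claw b a c z); sym_side.
have zc : ~~ E z c by apply/negP => zc; apply: (@no_claw c b d z); sym_side.
pose P4 := [set a; b; c; d].
have zP4 : z \notin cl_nbhd P4.
  apply/cl_nbhdP => [[| [p]]]; first by rewrite !inE !(eq_sym z) (negbTE naz) (negbTE nbz)
    (negbTE ncz) (negbTE ndz).
  by rewrite !inE -!orbA => /or4P [] /eqP -> pz; [move: az | move: zb | move: zc | move: dz];
    rewrite ?(Esym z) pz.
have aP4 : a \in cl_nbhd P4 by apply: cl_nbhd_sub; rewrite !inE eqxx.
have [u [v [uP4 vP4 uv]]] := connect_exit_edge (conn z a) zP4 aP4.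
exact: (P5_of_P4_exit ab bc cd ac ad bd uP4 vP4 uv).
Qed.

(* D1, D2, D3 are the closed balls of radius 1, 2, 3 around [a].  At distance >= 4 from [a],
   [b] yields an induced P5 on a shortest path; at distance 3, an induced P4 that [c]
   extends. *)
Lemma P5_of_far_pair a b c : (forall x y, connect E x y) -> stable_triple E a b c ->
  (forall z, ~~ (E a z && E b z)) -> has_P5_expansion.
Proof.
move=> conn /and5P [nab nac nbc ab /andP [ac bc]] no_common.
pose D1 := cl_nbhd [set a]; pose D2 := cl_nbhd D1; pose D3 := cl_nbhd D2.
have aD1 : a \in D1 by apply: cl_nbhd_sub; rewrite in_set1.
have D1P y : y \in D1 -> y = a \/ E a y.
  by case/cl_nbhdP => [| [z]]; rewrite in_set1 => /eqP ->; [left | right].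
have notD1 z : z \notin D1 -> ~~ E a z by apply: cl_nbhd_nonadj; rewrite in_set1.
have bD2 : b \notin D2.
  apply/cl_nbhdP => [[/D1P [ba | ab'] | [y /D1P [-> | ay] yb]]].
  - by rewrite ba eqxx in nab.
  - by rewrite ab' in ab.
  - by rewrite yb in ab.
  - by have := no_common y; rewrite ay Esym yb.
have path3 z : z \notin D2 -> z \in D3 ->
    exists y1 y2, [/\ E a y1, E y1 y2, E y2 z & y2 \notin D1].
  move=> zD2 /cl_nbhdP [zD2' | [y2 y2D2 y2z]]; first by rewrite zD2' in zD2.
  have y2D1 : y2 \notin D1 by apply: contra zD2 => y2D1; apply/cl_nbhdP; right; exists y2.
  case/cl_nbhdP: y2D2 => [y2D1' | [y1 /D1P [-> | ay1] y12]]; first by rewrite y2D1' in y2D1.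
    by rewrite (negbTE (notD1 _ y2D1)) in y12.
  by exists y1, y2.
case: (boolP (b \in D3)) => bD3; last first.
  have aD3 : a \in D3 by do 2 apply: cl_nbhd_sub.
  have [u [v [uD3 vD3 uv]]] := connect_exit_edge (conn b a) bD3 aD3.
  have vD2 : v \notin D2.
    by apply: contraL uv => vD2; rewrite Esym; exact: cl_nbhd_nonadj vD2 uD3.
  have [y1 [y2 [ay1 y12 y2v y2D1]]] := path3 v vD2 vD3.
  have y1D1 : y1 \in D1 by apply/cl_nbhdP; right; exists a; rewrite ?in_set1.
  have y2D2 : y2 \in D2 by apply/cl_nbhdP; right; exists y1.
  have uD2 : u \notin D2 by apply: contra uD3; apply: cl_nbhd_sub.
  have uD1 : u \notin D1 by apply: contra uD2; apply: cl_nbhd_sub.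
  have vD1 : v \notin D1 by apply: contra vD2; apply: cl_nbhd_sub.
  apply: (@induced_P5 a y1 y2 v u); rewrite ?notD1 ?(cl_nbhd_nonadj y1D1) //.
  - by rewrite Esym.
  - exact: cl_nbhd_nonadj y2D2 uD3.
have [y1 [y2 [ay1 y12 y2b y2D1]]] := path3 b bD2 bD3.
have y1D1 : y1 \in D1 by apply/cl_nbhdP; right; exists a; rewrite ?in_set1.
apply: (P5_of_P4_far_vertex (z := c) conn ay1 y12 y2b) => //.
- exact: notD1.
- exact: cl_nbhd_nonadj y1D1 bD2.
Qed.

Lemma stable_triple_perm a b c : stable_triple E a b c ->
  stable_triple E b c a /\ stable_triple E a c b.
Proof.
rewrite /stable_triple (eq_sym b a) (eq_sym c a) (eq_sym c b) (Esym b a) (Esym c a) (Esym c b).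
by move=> /and5P [-> -> -> -> /andP [-> ->]].
Qed.

Lemma P5_of_stable_triple :
  (forall x y, connect E x y) -> has_stable_triple E -> has_P5_expansion.
Proof.
move=> conn [a [b [c st]]]; have [st_bca st_acb] := stable_triple_perm st.
have common x y z : stable_triple E x y z -> has_P5_expansion \/ exists u, E x u && E y u.
  move=> stxyz; case: (boolP [exists u, E x u && E y u]) => [/existsP | /existsPn none].
    by right.
  by left; exact: P5_of_far_pair conn stxyz none.
case: (common _ _ _ st) => [// | [u /andP [au bu]]].
case: (common _ _ _ st_bca) => [// | [v /andP [bv cv]]].
case: (common _ _ _ st_acb) => [// | [w /andP [aw cw]]].
exact: P5_of_common_neighbours st au bu bv cv aw cw.
Qed.

Theorem claw_bull_free_expansion : (forall x y, connect E x y) -> has_stable_triple E ->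
  path_expansion_ge4 E \/ cycle_expansion_ge6 E.
Proof.
move=> conn /(P5_of_stable_triple conn) [S [lvl L]].
have [S' [lvl' [m' [m'4 L' maxl]]]] := maximal_layering L (leqnn 4).
exact: maximal_layering_expansion conn L' m'4 maxl.
Qed.

End ClawBullFree.

Theorem corollary1 (T : finType) (e : rel T) :
  simple_graph e -> 0 < #|T| ->
  (triangle_free e <->
   (complete_bipartite e \/
    (let G := compl_graph e in
     [/\ connected_graph G, claw_free G, bull_free G,
         ~ path_expansion_ge4 G & ~ cycle_expansion_ge6 G]))).
Proof.
move=> simple_e T_gt0 /=; have [esym _] := simple_e; set G := compl_graph e.
have Gsym : symmetric G by move=> x y; rewrite /G /compl_graph eq_sym esym.
have Girr : irreflexive G by move=> x; rewrite /G /compl_graph eqxx.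
have tfE := triangle_free_complE simple_e.
split=> [tf | [/complete_bipartite_triangle_free // | [[_ Gcon] clawG bullG npath ncyc]]].
  case: (boolP [forall x, [forall y, connect G x y]]) => [/forallP Gcon | ]; last first.
    rewrite negb_forall => /existsP [x]; rewrite negb_forall => /existsP [y nxy].
    by left; exact: triangle_free_compl_disconnected nxy.
  have nst := tfE.1 tf; right; split.
  - by split=> // x y; move/forallP: (Gcon x).
  - by move/(induced_stable_triple claw_stable_triple).
  - by move/(induced_stable_triple bull_stable_triple).
  - by move=> [k [k4 /(expansion_stable_triple (path_stable_triple k4))]].
  - by move=> [k [k6 /(expansion_stable_triple (cycle_stable_triple k6))]].
by apply/tfE => /(claw_bull_free_expansion Gsym Girr clawG bullG Gcon) [].
Qed.
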